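(* Let $R$ be a finite chain ring with maximal ideal $\mathfrak{m}$ and residue field $\mathbb{F}_q$, and let $\pi:R\to\mathbb{F}_q$ be the natural projection. Let $\lambda_1,\lambda_2$ be units of $R$ with $\pi(\lambda_1)\neq\pi(\lambda_2)$. For $i=1,2$, let $C_i$ be a free $\lambda_i$-constacyclic code over $R$ of length $n$, and suppose $C_1\cap C_2$ is both $\lambda_1$-constacyclic and $\lambda_2$-constacyclic. Then $C_1\cap C_2=R^n$ or $C_1\cap C_2=\{\mathbf{0}\}$.
   Context: A finite chain ring is a finite commutative local ring whose ideals form a chain. A linear code $C\subseteq R^n$ (an $R$-submodule) is $\lambda$-constacyclic if $(\lambda c_{n-1},c_0,\dots,c_{n-2})\in C$ whenever $(c_0,\dots,c_{n-1})\in C$; free means free as an $R$-module. $\pi(r)=r+\mathfrak{m}$. *)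

From HB Require Import structures.
From mathcomp Require Import all_boot all_order all_algebra.
Set Implicit Arguments. Unset Strict Implicit. Unset Printing Implicit Defensive.
Import GRing.Theory.
Local Open Scope ring_scope.

Definition is_ideal (R : finComUnitRingType) (I : {set R}) : Prop :=
  [/\ (0 : R) \in I,
      (forall x y, x \in I -> y \in I -> x + y \in I) &
      (forall r x, x \in I -> r * x \in I)].

Definition ideals_chain (R : finComUnitRingType) : Prop :=
  forall I J : {set R}, is_ideal I -> is_ideal J -> (I \subset J) || (J \subset I).

Definition unique_maximal_ideal (R : finComUnitRingType) (m : {set R}) : Prop :=
  [/\ is_ideal m, m != setT &
      forall I : {set R}, is_ideal I -> I != setT -> I \subset m].

Definition linear_code (R : finComUnitRingType) n (C : {set 'rV[R]_n}) : Prop :=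
  [/\ (0 : 'rV[R]_n) \in C,
      (forall x y, x \in C -> y \in C -> x + y \in C) &
      (forall (r : R) x, x \in C -> r *: x \in C)].

Definition free_code (R : finComUnitRingType) n (C : {set 'rV[R]_n}) : Prop :=
  exists k (B : 'M[R]_(k, n)),
    (forall x, (x \in C) <-> exists u : 'rV[R]_k, x = u *m B) /\
    (forall u : 'rV[R]_k, u *m B = 0 -> u = 0).

(* lambda-constacyclic shift: (c_0,...,c_{n-1}) |-> (lambda c_{n-1}, c_0, ..., c_{n-2}). *)
Definition cshift (R : finComUnitRingType) n (lam : R) (c : 'rV[R]_n) : 'rV[R]_n :=
  \row_(i < n) ((if nat_of_ord i == 0%N then lam else 1) * c 0 (ord_pred i)).

Definition constacyclic (R : finComUnitRingType) n (lam : R) (C : {set 'rV[R]_n}) : Prop :=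
  forall c, c \in C -> cshift lam c \in C.

From HB Require Import structures.
From mathcomp Require Import all_boot all_order all_algebra.
Set Implicit Arguments. Unset Strict Implicit. Unset Printing Implicit Defensive.
Import GRing.Theory.
Local Open Scope ring_scope.

(* Write D for C1 :&: C2 and suppose D <> 0.  For d in D the difference of its
   lam1- and lam2-shifts is (lam1 - lam2) d_(n-1) e_0, and lam1 - lam2 is a unit
   since it lies outside m.  Hence the ideal I = {x | x e_0 \in D} contains the
   last coordinate of every codeword, and, shifting first, every coordinate;
   shifting e_0 gives x e_i \in D for x in I.  The ideals form a chain, so the
   nonzero ideal I contains the socle Ann(m), and D contains every vector with
   entries in the socle.  A free code with a basis of size k containing all
   these vectors has |Ann(m)|^k = |Ann(m)|^n, hence k = n and it is all of R^n;
   thus C1 = C2 = R^n. *)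

Section LocalRing.
Variables (R : finComUnitRingType) (m : {set R}).

Definition pideal (z : R) : {set R} := [set z * r | r in [set: R]].

Lemma mem_pideal z : z \in pideal z.
Proof. by apply/imsetP; exists 1; rewrite ?inE ?mulr1. Qed.

Lemma is_ideal_pideal z : is_ideal (pideal z).
Proof.
split; first by apply/imsetP; exists 0; rewrite ?inE ?mulr0.
- move=> _ _ /imsetP[r _ ->] /imsetP[s _ ->].
  by apply/imsetP; exists (r + s); rewrite ?inE ?mulrDr.
- move=> s _ /imsetP[r _ ->].
  by apply/imsetP; exists (s * r); rewrite ?inE // mulrCA.
Qed.

Definition socle : {set R} := [set z | [forall x in m, z * x == 0]].

Lemma socle0 : 0 \in socle.
Proof. by rewrite inE; apply/forall_inP => x _; rewrite mul0r. Qed.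

Hypothesis m_max : unique_maximal_ideal m.

Lemma unit_notin_max x : x \notin m -> x \is a GRing.unit.
Proof.
have [_ _ max_m] := m_max; apply: contraR => x_nonunit.
have /subsetP : pideal x \subset m.
  apply: max_m (is_ideal_pideal x) _; apply: contra x_nonunit => /eqP pidealT.
  have /imsetP[r _ xr1] : 1 \in pideal x by rewrite pidealT inE.
  by apply/unitrPr; exists r.
by apply; apply: mem_pideal.
Qed.

Lemma unit_1Bmax x : x \in m -> 1 - x \is a GRing.unit.
Proof.
have [[_ addm mulm] mT _] := m_max.
move=> xm; apply: unit_notin_max; apply: contra mT => x1m.
have m1 : 1 \in m by rewrite -(subrK x 1) addm.
by apply/eqP/setP => r; rewrite inE -[r]mulr1 mulm.
Qed.

(* A nonzero element generating a minimal principal ideal is killed by m. *)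
Lemma socle_neq0 : exists2 z, z \in socle & z != 0.
Proof.
have [[_ _ mulm] _ _] := m_max.
case: (@arg_minnP _ 1 (fun z : R => z != 0) (fun z => #|pideal z|) (oner_neq0 R)).
move=> z z_neq0 z_min; exists z => //; rewrite inE; apply/forall_inP => x xm.
apply: contraLR z_neq0 => zx_neq0; rewrite negbK.
have pidealM : pideal (z * x) = pideal z.
  apply/eqP; rewrite eqEcard z_min // andbT.
  apply/subsetP => _ /imsetP[r _ ->].
  by apply/imsetP; exists (x * r); rewrite ?inE ?mulrA.
have /imsetP[r _ z_eq] : z \in pideal (z * x) by rewrite pidealM mem_pideal.
have z1xr : z * (1 - x * r) = 0 by rewrite mulrBr mulr1 mulrA -z_eq subrr.
have xr_m : x * r \in m by rewrite mulrC mulm.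
by rewrite -[z](mulrK (unit_1Bmax xr_m)) z1xr mul0r.
Qed.

Lemma socle_subset_ideal I a : ideals_chain R ->
  is_ideal I -> a \in I -> a != 0 -> socle \subset I.
Proof.
move=> chain I_ideal aI a_neq0; apply/subsetP => z z_soc.
have [_ _ mulI] := I_ideal.
case/orP: (chain _ _ (is_ideal_pideal z) I_ideal) => /subsetP sub.
  exact/sub/mem_pideal.
have /imsetP[r _ a_eq] := sub a aI.
have r_unit : r \is a GRing.unit.
  apply: unit_notin_max; apply: contra a_neq0 => rm.
  by move: z_soc; rewrite inE a_eq => /forall_inP/(_ r rm).
by rewrite -(mulrK r_unit z) mulrC -a_eq mulI.
Qed.

End LocalRing.

Section Codes.
Variable R : finComUnitRingType.

Definition rows_in n (S : {set R}) : {set 'rV[R]_n} :=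
  [set u : 'rV[R]_n | [forall i, u 0 i \in S]].

Lemma card_rows_in n S : #|rows_in n S| = (#|S| ^ n)%N.
Proof.
have -> : rows_in n S = [set \row_i f i | f : {ffun 'I_n -> R} in ffun_on S].
  apply/setP => u; rewrite inE; apply/forallP/imsetP => [uS | [f /ffun_onP fS ->] i].
    exists [ffun i => u 0 i]; first by apply/ffun_onP => i; rewrite ffunE.
    by apply/rowP => i; rewrite mxE ffunE.
  by rewrite mxE.
rewrite card_in_imset ?card_ffun_on ?card_ord // => f g _ _ /rowP fg.
by apply/ffunP => i; have := fg i; rewrite !mxE.
Qed.

Lemma linear_codeI n (C1 C2 : {set 'rV[R]_n}) :
  linear_code C1 -> linear_code C2 -> linear_code (C1 :&: C2).
Proof.
case=> [C1_0 C1D C1Z] [C2_0 C2D C2Z]; split; first by rewrite inE C1_0.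
- by move=> x y /setIP[? ?] /setIP[? ?]; rewrite inE C1D ?C2D.
- by move=> r x /setIP[? ?]; rewrite inE C1Z ?C2Z.
Qed.

Lemma linear_code_0Vneq0 n (C : {set 'rV[R]_n}) :
  linear_code C -> C = [set 0] \/ exists2 c, c \in C & c != 0.
Proof.
case=> C0 _ _; have [C_sub0 | /subsetPn[c cC]] := boolP (C \subset [set 0]).
  by left; apply/eqP; rewrite eqEsubset C_sub0 sub1set.
by rewrite in_set1 => c_neq0; right; exists c.
Qed.

Definition scalars_in n (C : {set 'rV[R]_n}) (v : 'rV[R]_n) : {set R} :=
  [set x | x *: v \in C].

Lemma is_ideal_scalars_in n (C : {set 'rV[R]_n}) v :
  linear_code C -> is_ideal (scalars_in C v).
Proof.
case=> C0 CD CZ; split; first by rewrite inE scale0r.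
- by move=> x y; rewrite !inE scalerDl; apply: CD.
- by move=> r x; rewrite !inE -scalerA; apply: CZ.
Qed.

Lemma rows_in_subset_code n (C : {set 'rV[R]_n}) (S : {set R}) : linear_code C ->
  (forall x i, x \in S -> x *: delta_mx 0 i \in C) -> rows_in n S \subset C.
Proof.
case=> C0 CD _ CS; apply/subsetP => v; rewrite inE => /forallP vS.
rewrite [v]row_sum_delta.
by apply: (big_ind (fun w => w \in C)) => // i _; apply: CS.
Qed.

Variable m : {set R}.

Lemma socle_rowsE n (u : 'rV[R]_n) :
  (u \in rows_in n (socle m)) = [forall x in m, x *: u == 0].
Proof.
rewrite inE; apply/forallP/forall_inP => [u_soc x xm | u_ann i].
  apply/eqP/rowP => i; have := u_soc i.
  by rewrite !mxE inE mulrC => /forall_inP/(_ x xm)/eqP.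
by rewrite inE; apply/forall_inP => x /u_ann/eqP/rowP/(_ i); rewrite !mxE mulrC => ->.
Qed.

Lemma socle_rows_mulmx k n (B : 'M[R]_(k, n)) (u : 'rV[R]_k) :
  (forall v : 'rV[R]_k, v *m B = 0 -> v = 0) ->
  (u *m B \in rows_in n (socle m)) = (u \in rows_in k (socle m)).
Proof.
move=> B_free; rewrite !socle_rowsE; apply: eq_forallb_in => x _.
by rewrite scalemxAl; apply/eqP/eqP => [/B_free | ->]; rewrite ?mul0mx.
Qed.

Hypothesis m_max : unique_maximal_ideal m.

(* B maps the socle vectors of R^k onto those of C, so |socle|^k = |socle|^n. *)
Lemma free_code_full n (C : {set 'rV[R]_n}) :
  free_code C -> rows_in n (socle m) \subset C -> C = setT.
Proof.
case=> k [B [C_span B_free]] /subsetP soc_sub.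
have mulB_inj : injective (fun u : 'rV[R]_k => u *m B).
  move=> u v /eqP; rewrite -subr_eq0 -mulmxBl => /eqP/B_free/eqP.
  by rewrite subr_eq0 => /eqP.
have soc_img : rows_in n (socle m) = (fun u => u *m B) @: rows_in k (socle m).
  apply/setP => v; apply/idP/imsetP => [v_soc | [u u_soc ->]].
    have [u v_eq] := (C_span v).1 (soc_sub v v_soc).
    by exists u; rewrite // -(socle_rows_mulmx _ B_free) -v_eq.
  by rewrite socle_rows_mulmx.
have soc_gt1 : (1 < #|socle m|)%N.
  have [z z_soc z_neq0] := socle_neq0 m_max.
  by apply/card_gt1P; exists z, 0; rewrite z_soc socle0.
have k_eq : k = n.
  apply/eqP; rewrite -(eqn_exp2l _ _ soc_gt1) -!card_rows_in soc_img.
  by rewrite card_imset.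
subst k; apply/eqP; rewrite eqEcard subsetT cardsT -(card_imset _ mulB_inj) /=.
by apply: subset_leq_card; apply/subsetP => _ /imsetP[u _ ->]; apply/C_span; exists u.
Qed.

End Codes.

Lemma ordS_eq0 n (i : 'I_n.+1) : (ordS i == ord0) = (i == ord_max).
Proof.
apply/eqP/eqP => [/(congr1 (@ord_pred _)) | ->]; last first.
  by apply: val_inj; rewrite /= modnn.
by rewrite ordSK => ->; apply: val_inj; rewrite /= modn_small.
Qed.

Lemma ordS_inord n t : (t < n)%N -> ordS (inord t : 'I_n.+1) = inord t.+1.
Proof.
by move=> lt_tn; apply: val_inj; rewrite /= !inordK ?modn_small // ltnS ltnW.
Qed.

Lemma inord_eq_max n t : (t < n)%N -> (inord t == ord_max :> 'I_n.+1) = false.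
Proof. by move=> lt_tn; rewrite -val_eqE /= inordK ?ltn_eqF // ltnS ltnW. Qed.

Section Shift.
Variables (R : finComUnitRingType) (n : nat).
Implicit Types (lam a : R) (c : 'rV[R]_n.+1).

Lemma cshift_ordS lam c i :
  cshift lam c 0 (ordS i) = (if i == ord_max then lam else 1) * c 0 i.
Proof. by rewrite mxE ordSK -[_ == 0%N]/(ordS i == ord0) ordS_eq0. Qed.

Lemma cshiftB l1 l2 c :
  cshift l1 c - cshift l2 c = ((l1 - l2) * c 0 ord_max) *: delta_mx 0 ord0.
Proof.
apply/rowP => k; rewrite -[k]ord_predK; move: (ord_pred k) => j.
rewrite 2!mxE ordSK -[_ == 0%N]/(ordS j == ord0) ordS_eq0.
rewrite [(- cshift _ _) _ _]mxE cshift_ordS.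
rewrite !mxE eqxx ordS_eq0.
by case: eqP => [->|_]; rewrite ?mulr1 ?mulr0 ?mul1r ?subrr // mulrBl.
Qed.

Lemma cshift_delta lam a (i : 'I_n.+1) : cshift lam (a *: delta_mx 0 i) =
  ((if i == ord_max then lam else 1) * a) *: delta_mx 0 (ordS i).
Proof.
apply/rowP => k; rewrite -[k]ord_predK; move: (ord_pred k) => j.
rewrite cshift_ordS !mxE eqxx (inj_eq (@ordS_inj _)).
by case: (eqVneq j i) => [->|_]; rewrite ?mulr0 ?mulrA.
Qed.

Lemma iter_cshift_delta lam a (i : 'I_n.+1) :
  iter i (cshift lam) (a *: delta_mx 0 ord0) = a *: delta_mx 0 i.
Proof.
suff iter_inord : forall t, (t <= n)%N ->
    iter t (cshift lam) (a *: delta_mx 0 ord0) = a *: delta_mx 0 (inord t : 'I_n.+1).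
  by rewrite iter_inord ?inord_val // -ltnS.
elim=> [_ | t IH lt_tn].
  by rewrite (_ : inord 0 = ord0) //; apply: val_inj; rewrite /= inordK.
by rewrite iterS IH 1?ltnW // cshift_delta inord_eq_max // mul1r ordS_inord.
Qed.

Lemma iter_cshift_coord lam c (i : 'I_n.+1) t : (i + t <= n)%N ->
  iter t (cshift lam) c 0 (inord (i + t)) = c 0 i.
Proof.
elim: t => [|t IH]; first by rewrite addn0 inord_val.
rewrite addnS => lt_itn; rewrite -ordS_inord // iterS cshift_ordS.
by rewrite inord_eq_max // mul1r IH // ltnW.
Qed.

End Shift.

Lemma iter_constacyclic (R : finComUnitRingType) n lam (C : {set 'rV[R]_n}) c t :
  constacyclic lam C -> c \in C -> iter t (cshift lam) c \in C.
Proof. by move=> C_lam cC; elim: t => //= t; apply: C_lam. Qed.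

Section BiConstacyclic.
Variables (R : finComUnitRingType) (n : nat) (l1 l2 : R) (D : {set 'rV[R]_n.+1}).
Hypotheses (D_code : linear_code D) (D_l1 : constacyclic l1 D) (D_l2 : constacyclic l2 D).
Hypothesis l12_unit : l1 - l2 \is a GRing.unit.

Lemma coord_in_scalars c i : c \in D -> c 0 i \in scalars_in D (delta_mx 0 ord0).
Proof.
have [_ DD DZ] := D_code.
have [_ _ mulI] := is_ideal_scalars_in (delta_mx 0 ord0) D_code.
have last_in d : d \in D -> d 0 ord_max \in scalars_in D (delta_mx 0 ord0).
  move=> dD; rewrite -(mulKr l12_unit (d 0 ord_max)) mulI // inE -cshiftB.
  by rewrite DD ?D_l1 // -scaleN1r DZ ?D_l2.
move=> cD; have le_in : (i <= n)%N by rewrite -ltnS.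
rewrite -(@iter_cshift_coord _ _ l1 c i (n - i)) subnKC //.
have -> : inord n = ord_max :> 'I_n.+1 by apply: val_inj; rewrite /= inordK.
exact/last_in/iter_constacyclic.
Qed.

Lemma scaled_delta_in x i :
  x \in scalars_in D (delta_mx 0 ord0) -> x *: delta_mx 0 i \in D.
Proof.
by rewrite inE => xD; rewrite -(iter_cshift_delta l1); apply: iter_constacyclic.
Qed.

Lemma socle_rows_subset m c : ideals_chain R -> unique_maximal_ideal m ->
  c \in D -> c != 0 -> rows_in n.+1 (socle m) \subset D.
Proof.
move=> chain m_max cD c_neq0.
have [j cj_neq0] : exists j, c 0 j != 0.
  apply/existsP; apply: contraR c_neq0 => /existsPn c0.
  by apply/eqP/rowP => j; rewrite mxE; apply/eqP/negPn/c0.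
have /subsetP soc_sub := socle_subset_ideal m_max chain
  (is_ideal_scalars_in _ D_code) (coord_in_scalars j cD) cj_neq0.
by apply: rows_in_subset_code D_code _ => x i /soc_sub; apply: scaled_delta_in.
Qed.

End BiConstacyclic.

Theorem proposition4p5 (R : finComUnitRingType) (m : {set R}) (n : nat)
  (lam1 lam2 : R) (C1 C2 : {set 'rV[R]_n}) :
  ideals_chain R -> unique_maximal_ideal m ->
  lam1 \is a GRing.unit -> lam2 \is a GRing.unit ->
  lam1 - lam2 \notin m ->
  linear_code C1 -> free_code C1 -> constacyclic lam1 C1 ->
  linear_code C2 -> free_code C2 -> constacyclic lam2 C2 ->
  constacyclic lam1 (C1 :&: C2) -> constacyclic lam2 (C1 :&: C2) ->
  C1 :&: C2 = setT \/ C1 :&: C2 = [set 0].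
Proof.
move=> chain m_max _ _ l12_notin C1_code C1_free _ C2_code C2_free _ D_l1 D_l2.
have D_code := linear_codeI C1_code C2_code.
have [-> | [c cD c_neq0]] := linear_code_0Vneq0 D_code; [by right | left].
case: n => [|n] in C1 C2 C1_code C1_free C2_code C2_free D_l1 D_l2 D_code c cD c_neq0 *.
  by rewrite thinmx0 eqxx in c_neq0.
have soc_sub := socle_rows_subset D_code D_l1 D_l2
  (unit_notin_max m_max l12_notin) chain m_max cD c_neq0.
have C1T : C1 = setT :=
  free_code_full m_max C1_free (subset_trans soc_sub (subsetIl _ _)).
have C2T : C2 = setT :=
  free_code_full m_max C2_free (subset_trans soc_sub (subsetIr _ _)).
by rewrite C1T C2T setIid.
Qed.
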